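(* Let $X$, $Y$ be disjoint sets of cardinality at least two, $M\le\mathrm{Sym}(X)$ and $N\le\mathrm{Sym}(Y)$ nontrivial permutation groups, $T$ the $(|X|,|Y|)$-biregular tree and $c$ a legal colouring. If $m$ (resp. $n$) denotes the number of orbits of $M$ (resp. $N$), then the quotient $U_c(M,N)\backslash T$ is the complete bipartite graph $K_{m,n}$.
   Context: $T$ has natural bipartition $VT=V_X\sqcup V_Y$ (vertices in $V_X$ have valency $|X|$, in $V_Y$ valency $|Y|$). $A(v)$, $\overline{A}(v)$ are the sets of arcs with origin, resp. terminus, $v$. A legal colouring is a map $c:AT\to X\cup Y$ restricting to a bijection $A(v)\to X$ for $v\in V_X$, to a bijection $A(v)\to Y$ for $v\in V_Y$, and constant on each $\overline{A}(v)$. $U_c(M,N)$ is the group of $g\in\mathrm{Aut}(T)$ with $gV_X=V_X$ and $c|_{A(gv)}\circ g|_{A(v)}\circ(c|_{A(v)})^{-1}$ in $M$ for $v\in V_X$ and in $N$ for $v\in V_Y$. For a group $G$ acting on a tree without inversion, the quotient $G\backslash T$ is the (multi)graph whose vertices are the $G$-orbits on $VT$ and whose edges are the $G$-orbits on edges of $T$, an edge-orbit being incident to the vertex-orbits containing its endpoints. *)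

From Stdlib Require Import List Relations.
Import ListNotations.

Definition bij {A B : Type} (f : A -> B) : Prop :=
  exists g : B -> A, (forall a, g (f a) = a) /\ (forall b, f (g b) = b).

Definition perm_group {X : Type} (M : (X -> X) -> Prop) : Prop :=
  (forall s, M s -> bij s) /\
  M (fun x => x) /\
  (forall s t, M s -> M t -> M (fun x => s (t x))) /\
  (forall s, M s -> exists t, M t /\ (forall x, t (s x) = x) /\ (forall x, s (t x) = x)).

Definition nontrivial_group {X : Type} (M : (X -> X) -> Prop) : Prop :=
  exists s, M s /\ exists x, s x <> x.

Definition orbit {X : Type} (M : (X -> X) -> Prop) (x : X) : X -> Prop :=
  fun y => exists s, M s /\ s x = y.

Definition orbits {X : Type} (M : (X -> X) -> Prop) : Type :=
  { S : X -> Prop | exists x, S = orbit M x }.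

Fixpoint is_walk {V : Type} (adj : V -> V -> Prop) (l : list V) : Prop :=
  match l with
  | x :: ((y :: _) as t) => adj x y /\ is_walk adj t
  | _ => True
  end.

Fixpoint no_backtrack {V : Type} (l : list V) : Prop :=
  match l with
  | x :: ((_ :: z :: _) as t) => x <> z /\ no_backtrack t
  | _ => True
  end.

Definition is_tree {V : Type} (adj : V -> V -> Prop) : Prop :=
  (forall u v, adj u v -> adj v u) /\
  (forall v, ~ adj v v) /\
  inhabited V /\
  (forall u v, clos_refl_trans V adj u v) /\
  (forall v l, l <> [] -> is_walk adj (v :: l) -> no_backtrack (v :: l) ->
     last l v <> v).

Definition is_aut {V : Type} (adj : V -> V -> Prop) (g : V -> V) : Prop :=
  bij g /\ (forall u v, adj u v <-> adj (g u) (g v)).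

Definition bipartition {V : Type} (adj : V -> V -> Prop) (VX : V -> Prop) : Prop :=
  forall u v, adj u v -> (VX u <-> ~ VX v).

(* Arcs are pairs (u,v) with adj u v; a colouring assigns c u v : X + Y to
   the arc (u,v) (values on non-arcs are irrelevant).  Colours of X are
   inl x, colours of Y are inr y (X, Y disjoint). *)
Definition legal_colouring {V X Y : Type} (adj : V -> V -> Prop) (VX : V -> Prop)
    (c : V -> V -> X + Y) : Prop :=
  (forall v, VX v ->
     (forall w, adj v w -> exists x, c v w = inl x) /\
     (forall w w', adj v w -> adj v w' -> c v w = c v w' -> w = w') /\
     (forall x, exists w, adj v w /\ c v w = inl x)) /\
  (forall v, ~ VX v ->
     (forall w, adj v w -> exists y, c v w = inr y) /\
     (forall w w', adj v w -> adj v w' -> c v w = c v w' -> w = w') /\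
     (forall y, exists w, adj v w /\ c v w = inr y)) /\
  (forall v u u', adj u v -> adj u' v -> c u v = c u' v).

(* The group U_c(M,N) as a predicate on maps V -> V.  The local action
   c|A(gv) o g|A(v) o (c|A(v))^{-1} is the map s with
   c (g v) (g w) = s (c v w) for w adjacent to v. *)
Definition U_c {V X Y : Type} (adj : V -> V -> Prop) (VX : V -> Prop)
    (c : V -> V -> X + Y) (M : (X -> X) -> Prop) (N : (Y -> Y) -> Prop)
    (g : V -> V) : Prop :=
  is_aut adj g /\
  (forall v, VX v -> VX (g v)) /\
  (forall w, VX w -> exists v, VX v /\ g v = w) /\
  (forall v, VX v -> exists s, M s /\
     forall w x, adj v w -> c v w = inl x -> c (g v) (g w) = inl (s x)) /\
  (forall v, ~ VX v -> exists s, N s /\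
     forall w y, adj v w -> c v w = inr y -> c (g v) (g w) = inr (s y)).

Definition qvert {V : Type} (G : (V -> V) -> Prop) : Type := orbits G.

(* the G-orbit of the (undirected) edge {u,v}, recorded as a set of
   ordered pairs containing both orientations of each edge in the orbit *)
Definition edge_orbit {V : Type} (G : (V -> V) -> Prop) (u v : V) : V * V -> Prop :=
  fun p => exists g, G g /\ ((g u, g v) = p \/ (g v, g u) = p).

Definition qedge {V : Type} (adj : V -> V -> Prop) (G : (V -> V) -> Prop) : Type :=
  { E : V * V -> Prop | exists u v, adj u v /\ E = edge_orbit G u v }.

Definition qinc {V : Type} (adj : V -> V -> Prop) (G : (V -> V) -> Prop)
    (E : qedge adj G) (O : qvert G) : Prop :=
  exists u v, proj1_sig E (u, v) /\ proj1_sig O u.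

(* the complete bipartite graph K_{A,B}: vertices A + B, one edge (a,b)
   joining inl a and inr b for each pair *)
Definition K_inc {A B : Type} (e : A * B) (z : A + B) : Prop :=
  z = inl (fst e) \/ z = inr (snd e).

Definition quotient_iso_Kbip {V : Type} (adj : V -> V -> Prop) (G : (V -> V) -> Prop)
    (A B : Type) : Prop :=
  exists (phi : qvert G -> A + B) (psi : qedge adj G -> A * B),
    bij phi /\ bij psi /\
    forall E O, qinc adj G E O <-> K_inc (psi E) (phi O).

From Stdlib Require Import List Relations Arith Lia Classical ClassicalEpsilon
  FunctionalExtensionality PropExtensionality ProofIrrelevance.
Import ListNotations.

(* Every vertex has an incoming colour: the common colour of the arcs ending at it,
   an element of Y on V_X and of X on V_Y.  Two vertices lie in one U_c(M,N)-orbit iff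
   their incoming colours lie in one M- or N-orbit, and an edge orbit is determined by
   the classes of its two endpoints; this identifies the quotient with K_{m,n}.
   Transitivity comes from an extension property of the tree: given permutations
   s1 in M and s2 in N and vertices p, a whose incoming colours correspond under
   (s1, s2), there is an automorphism sending p to a which acts as (s1, s2) on all
   colours.  It is built by transporting a along walks from p; acyclicity of the tree
   makes the result independent of the walk. *)

Definition is_inl {A B : Type} (s : A + B) : Prop :=
  match s with inl _ => True | inr _ => False end.

Definition sum_map {A B A' B' : Type} (f : A -> A') (g : B -> B') (s : A + B) : A' + B' :=
  match s with inl a => inl (f a) | inr b => inr (g b) end.

Lemma is_inl_sum_map {A B A' B' : Type} (f : A -> A') (g : B -> B') s :
  is_inl (sum_map f g s) <-> is_inl s.
Proof. destruct s; simpl; tauto. Qed.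

Lemma sum_map_comp {A B A' B' A'' B'' : Type} (f : A -> A') (g : B -> B')
    (f' : A' -> A'') (g' : B' -> B'') s :
  sum_map f' g' (sum_map f g s) = sum_map (fun a => f' (f a)) (fun b => g' (g b)) s.
Proof. destruct s; reflexivity. Qed.

Lemma sum_map_cancel {A B : Type} (f f' : A -> A) (g g' : B -> B) :
  (forall a, f' (f a) = a) -> (forall b, g' (g b) = b) ->
  forall s, sum_map f' g' (sum_map f g s) = s.
Proof. intros Hf Hg [a|b]; simpl; congruence. Qed.

Lemma sum_map_id {A B : Type} (s : A + B) : sum_map (fun a => a) (fun b => b) s = s.
Proof. destruct s; reflexivity. Qed.

Lemma last_cons_default {A : Type} (l : list A) (z d : A) : last (z :: l) d = last l z.
Proof.
  revert z d. induction l as [|b l IH]; intros z d; [reflexivity|].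
  change (last (b :: l) d = last (b :: l) z). now rewrite !IH.
Qed.

Lemma bij_of_inj_surj {A B : Type} (f : A -> B) :
  (forall a a', f a = f a' -> a = a') -> (forall b, exists a, f a = b) -> bij f.
Proof.
  intros Hinj Hsurj.
  exists (fun b => proj1_sig (constructive_indefinite_description _ (Hsurj b))).
  split.
  - intros a. apply Hinj. now destruct (constructive_indefinite_description _ (Hsurj (f a))).
  - intros b. now destruct (constructive_indefinite_description _ (Hsurj b)).
Qed.

Lemma sig_eq {A : Type} {P : A -> Prop} (u v : sig P) : proj1_sig u = proj1_sig v -> u = v.
Proof. apply eq_sig_hprop. intros; apply proof_irrelevance. Qed.

Section Orbits.
Variables (Z : Type) (P : (Z -> Z) -> Prop).
Hypothesis HP : perm_group P.

Lemma orbit_refl x : orbit P x x.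
Proof. exists (fun x => x). split; [apply HP | reflexivity]. Qed.

Lemma orbit_shift s x : P s -> orbit P (s x) = orbit P x.
Proof.
  intros Hs. destruct HP as [_ [_ [Pcomp Pinv]]].
  apply functional_extensionality; intro y; apply propositional_extensionality.
  split.
  - intros [r [Hr <-]]. exists (fun x => r (s x)). auto.
  - intros [r [Hr <-]]. destruct (Pinv s Hs) as [t [Ht [Hts _]]].
    exists (fun x => r (t x)). split; [auto | now rewrite Hts].
Qed.

Definition orbit_class (x : Z) : orbits P := exist _ (orbit P x) (ex_intro _ x eq_refl).

Lemma orbit_class_eq x x' : orbit_class x = orbit_class x' <-> exists s, P s /\ s x = x'.
Proof.
  split.
  - intros H. change (proj1_sig (orbit_class x) x').
    rewrite H. apply orbit_refl.
  - intros [s [Hs <-]]. apply sig_eq. simpl. symmetry. now apply orbit_shift.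
Qed.

Lemma orbit_class_surj (O : orbits P) : exists x, O = orbit_class x.
Proof. destruct O as [S [x Hx]]. exists x. now apply sig_eq. Qed.

Definition orbit_rep (O : orbits P) : Z :=
  proj1_sig (constructive_indefinite_description _ (orbit_class_surj O)).

Lemma orbit_rep_spec O : O = orbit_class (orbit_rep O).
Proof. unfold orbit_rep. now destruct (constructive_indefinite_description _ _). Qed.

End Orbits.

Arguments orbit_class {Z} P x.
Arguments orbit_rep {Z P} O.
Arguments orbit_rep_spec {Z P} O.

(* [ab] is the edge of K_{A,B} to which the edge [{u, v}] is sent. *)
Definition ends {V A B : Type} (F : V -> A + B) (ab : A * B) (u v : V) : Prop :=
  (F u = inl (fst ab) /\ F v = inr (snd ab)) \/ (F u = inr (snd ab) /\ F v = inl (fst ab)).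

Section QuotientCriterion.
Variables (V A B : Type) (adj : V -> V -> Prop) (G : (V -> V) -> Prop) (F : V -> A + B).
Hypothesis adj_sym : forall u v, adj u v -> adj v u.
Hypothesis HG : perm_group G.
Hypothesis F_invariant : forall g z, G g -> F (g z) = F z.
Hypothesis F_transitive : forall z z', F z = F z' -> exists g, G g /\ g z = z'.
Hypothesis F_surj : forall s, exists z, F z = s.
Hypothesis F_edge : forall u v, adj u v -> exists ab, ends F ab u v.
Hypothesis F_edge_surj : forall a b, exists u v, adj u v /\ F u = inl a /\ F v = inr b.
Hypothesis F_edge_transitive : forall u v u' v', adj u v -> adj u' v' ->
  F u = F u' -> F v = F v' -> exists g, G g /\ g u = u' /\ g v = v'.

Lemma in_orbit_iff (O : orbits G) z : proj1_sig O z <-> F (orbit_rep O) = F z.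
Proof.
  rewrite (orbit_rep_spec O) at 1. simpl. split.
  - intros [g [Hg <-]]. now rewrite F_invariant.
  - apply F_transitive.
Qed.

Lemma edge_orbit_refl u v : edge_orbit G u v (u, v).
Proof. exists (fun x => x). split; [apply HG | auto]. Qed.

Lemma edge_orbit_sym u v : edge_orbit G u v = edge_orbit G v u.
Proof.
  apply functional_extensionality; intro e; apply propositional_extensionality.
  split; intros [g [Hg He]]; exists g; tauto.
Qed.

Lemma edge_orbit_shift g u v : G g -> edge_orbit G (g u) (g v) = edge_orbit G u v.
Proof.
  intros Hg. destruct HG as [_ [_ [Gcomp Ginv]]].
  destruct (Ginv g Hg) as [h [Hh [Hhg _]]].
  apply functional_extensionality; intro e; apply propositional_extensionality.
  split.
  - intros [g' [Hg' He]]. exists (fun x => g' (g x)). auto.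
  - intros [g' [Hg' He]]. exists (fun x => g' (h x)). rewrite !Hhg. auto.
Qed.

Lemma edge_orbit_labels u v u' v' : edge_orbit G u v (u', v') ->
  (F u' = F u /\ F v' = F v) \/ (F u' = F v /\ F v' = F u).
Proof.
  intros [g [Hg [He|He]]]; injection He as <- <-; rewrite !F_invariant; auto.
Qed.

Lemma ends_functional ab ab' u v : ends F ab u v -> ends F ab' u v -> ab = ab'.
Proof.
  destruct ab as [a b], ab' as [a' b']. unfold ends; simpl.
  intros [[-> ->]|[-> ->]] [[Hu Hv]|[Hu Hv]]; congruence.
Qed.

Lemma ends_K_inc ab u v z : ends F ab u v -> (K_inc ab z <-> z = F u \/ z = F v).
Proof. unfold K_inc. intros [[-> ->]|[-> ->]]; tauto. Qed.

Lemma ends_edge_orbit ab u v u' v' :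
  edge_orbit G u v = edge_orbit G u' v' -> ends F ab u v -> ends F ab u' v'.
Proof.
  intros E Hends. pose proof (edge_orbit_refl u' v') as Huv. rewrite <- E in Huv.
  unfold ends in *. destruct (edge_orbit_labels _ _ _ _ Huv) as [[-> ->]|[-> ->]]; tauto.
Qed.

Lemma qedge_ends (E : qedge adj G) :
  exists ab u v, adj u v /\ proj1_sig E = edge_orbit G u v /\ ends F ab u v.
Proof.
  destruct E as [S [u [v [Huv ->]]]]. destruct (F_edge u v Huv) as [ab Hab].
  exists ab, u, v. auto.
Qed.

Definition edge_label (E : qedge adj G) : A * B :=
  proj1_sig (constructive_indefinite_description _ (qedge_ends E)).

Lemma edge_label_spec E :
  exists u v, adj u v /\ proj1_sig E = edge_orbit G u v /\ ends F (edge_label E) u v.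
Proof. unfold edge_label. now destruct (constructive_indefinite_description _ _). Qed.

Lemma edge_orbit_oriented ab u v : adj u v -> ends F ab u v ->
  exists u' v', adj u' v' /\ edge_orbit G u v = edge_orbit G u' v' /\
    F u' = inl (fst ab) /\ F v' = inr (snd ab).
Proof.
  intros Huv [[Hu Hv]|[Hu Hv]].
  - exists u, v. auto.
  - exists v, u. rewrite edge_orbit_sym. auto.
Qed.

Lemma vertex_label_bij : bij (fun O : qvert G => F (orbit_rep O)).
Proof.
  apply bij_of_inj_surj.
  - intros O O' HOO'. destruct (F_transitive _ _ HOO') as [g [Hg Hgr]].
    rewrite (orbit_rep_spec O), (orbit_rep_spec O'). symmetry.
    apply orbit_class_eq; eauto.
  - intros s. destruct (F_surj s) as [z <-].
    exists (orbit_class G z). apply in_orbit_iff. apply orbit_refl, HG.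
Qed.

Lemma edge_label_bij : bij edge_label.
Proof.
  apply bij_of_inj_surj.
  - intros E E' HEE'.
    destruct (edge_label_spec E) as [u1 [v1 [Huv1 [HE1 Hends1]]]].
    destruct (edge_label_spec E') as [u2 [v2 [Huv2 [HE2 Hends2]]]].
    rewrite HEE' in Hends1.
    destruct (edge_orbit_oriented _ _ _ Huv1 Hends1) as [u1' [v1' [H1 [E1 [Fu1 Fv1]]]]].
    destruct (edge_orbit_oriented _ _ _ Huv2 Hends2) as [u2' [v2' [H2 [E2 [Fu2 Fv2]]]]].
    destruct (F_edge_transitive u1' v1' u2' v2') as [g [Hg [<- <-]]]; try congruence.
    apply sig_eq. now rewrite HE1, HE2, E1, E2, edge_orbit_shift.
  - intros [a b]. destruct (F_edge_surj a b) as [u [v [Huv [Fu Fv]]]].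
    exists (exist _ (edge_orbit G u v) (ex_intro _ u (ex_intro _ v (conj Huv eq_refl)))).
    destruct (edge_label_spec
      (exist _ (edge_orbit G u v) (ex_intro _ u (ex_intro _ v (conj Huv eq_refl)))))
      as [u' [v' [_ [HE Hends]]]].
    simpl in HE. apply (ends_edge_orbit _ _ _ _ _ (eq_sym HE)) in Hends.
    apply (ends_functional _ _ u v); [exact Hends | left; auto].
Qed.

Lemma qinc_labels E O :
  qinc adj G E O <-> K_inc (edge_label E) (F (orbit_rep O)).
Proof.
  destruct (edge_label_spec E) as [u [v [Huv [HE Hends]]]].
  rewrite (ends_K_inc _ _ _ _ Hends). unfold qinc. rewrite HE. split.
  - intros [u' [v' [Hedge HO]]]. apply in_orbit_iff in HO. rewrite HO.
    destruct (edge_orbit_labels _ _ _ _ Hedge) as [[-> _]|[-> _]]; auto.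
  - intros [HO|HO].
    + exists u, v. split; [apply edge_orbit_refl | now apply in_orbit_iff].
    + exists v, u. split; [rewrite edge_orbit_sym; apply edge_orbit_refl | now apply in_orbit_iff].
Qed.

Theorem quotient_iso_Kbip_of_labelling : quotient_iso_Kbip adj G A B.
Proof.
  exists (fun O => F (orbit_rep O)), edge_label.
  split; [apply vertex_label_bij | split; [apply edge_label_bij | apply qinc_labels]].
Qed.

End QuotientCriterion.

Section ColouredTree.
Variables (V X Y : Type) (adj : V -> V -> Prop) (VX : V -> Prop) (c : V -> V -> X + Y).
Hypothesis adj_sym : forall u v, adj u v -> adj v u.
Hypothesis V_inhabited : inhabited V.
Hypothesis connected : forall u v, clos_refl_trans V adj u v.
Hypothesis acyclic : forall v l, l <> [] -> is_walk adj (v :: l) -> no_backtrack (v :: l) ->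
  last l v <> v.
Hypothesis Hbip : bipartition adj VX.
Hypothesis Hc : legal_colouring adj VX c.
Variables (x0 : X) (y0 : Y).

Definition outgoing (z : V) (col : X + Y) : Prop := VX z <-> is_inl col.

Lemma outgoing_colour z w : adj z w -> outgoing z (c z w).
Proof.
  intros Hzw. destruct Hc as [HcX [HcY _]]. unfold outgoing.
  destruct (classic (VX z)) as [Hz|Hz].
  - destruct (proj1 (HcX z Hz) w Hzw) as [x ->]. simpl. tauto.
  - destruct (proj1 (HcY z Hz) w Hzw) as [y ->]. simpl. tauto.
Qed.

Lemma colour_inj z w w' : adj z w -> adj z w' -> c z w = c z w' -> w = w'.
Proof.
  destruct Hc as [HcX [HcY _]].
  destruct (classic (VX z)) as [Hz|Hz]; [apply (HcX z Hz) | apply (HcY z Hz)].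
Qed.

Lemma colour_surj z col : outgoing z col -> exists w, adj z w /\ c z w = col.
Proof.
  destruct Hc as [HcX [HcY _]]. unfold outgoing.
  destruct col as [x|y]; simpl; intros Hz.
  - apply (HcX z (proj2 Hz I)).
  - apply (HcY z (fun H => proj1 Hz H)).
Qed.

Definition nbr_col (z : V) (col : X + Y) : V :=
  epsilon (inhabits z) (fun w => adj z w /\ c z w = col).

Lemma nbr_col_spec z col : outgoing z col -> adj z (nbr_col z col) /\ c z (nbr_col z col) = col.
Proof. intros Hz. unfold nbr_col. apply epsilon_spec. now apply colour_surj. Qed.

Lemma nbr_col_colour z w : adj z w -> nbr_col z (c z w) = w.
Proof.
  intros Hzw. destruct (nbr_col_spec z (c z w) (outgoing_colour z w Hzw)) as [H1 H2].
  now apply colour_inj with z.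
Qed.

Lemma has_in_neighbour z : exists q, adj q z.
Proof.
  assert (Hout : outgoing z (if excluded_middle_informative (VX z) then inl x0 else inr y0)).
  { unfold outgoing. destruct (excluded_middle_informative (VX z)); simpl; tauto. }
  destruct (colour_surj _ _ Hout) as [w [Hzw _]]. eauto.
Qed.

(* Well defined because a legal colouring is constant on the arcs ending at [z]. *)
Definition in_colour (z : V) : X + Y := c (epsilon (inhabits z) (fun q => adj q z)) z.

Lemma in_colour_eq q z : adj q z -> in_colour z = c q z.
Proof.
  intros Hqz. destruct Hc as [_ [_ Hin]]. apply Hin; [|exact Hqz].
  apply epsilon_spec with (P := fun q => adj q z). eauto.
Qed.

Lemma in_colour_side z : VX z <-> ~ is_inl (in_colour z).
Proof.
  destruct (has_in_neighbour z) as [q Hqz].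
  pose proof (outgoing_colour q z Hqz) as Hout. pose proof (Hbip q z Hqz) as Hside.
  rewrite (in_colour_eq q z Hqz). unfold outgoing in Hout.
  destruct (classic (VX z)); tauto.
Qed.

Lemma in_colour_surj col : exists z, in_colour z = col.
Proof.
  destruct V_inhabited as [v0].
  assert (Hv : exists v, outgoing v col).
  { destruct (classic (outgoing v0 col)) as [H|H]; [eauto|].
    destruct (has_in_neighbour v0) as [w Hw]. exists w.
    pose proof (Hbip w v0 Hw). unfold outgoing in *. destruct (classic (VX v0)); tauto. }
  destruct Hv as [v Hv]. destruct (nbr_col_spec v col Hv) as [Hvz Hcol].
  exists (nbr_col v col). now rewrite (in_colour_eq v).
Qed.

Section Transport.
Variable sigma : X + Y -> X + Y.
Hypothesis sigma_is_inl : forall col, is_inl (sigma col) <-> is_inl col.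

(* [a] is a possible image of [p] under an automorphism acting as [sigma] on colours. *)
Definition compatible (p a : V) : Prop := in_colour a = sigma (in_colour p).

Lemma compatible_side p a : compatible p a -> (VX p <-> VX a).
Proof.
  unfold compatible. intros Hpa. rewrite !in_colour_side, Hpa, sigma_is_inl. tauto.
Qed.

(* The image of the neighbour [z] of [p], given the image [a] of [p]. *)
Definition move (a p z : V) : V := nbr_col a (sigma (c p z)).

Lemma compatible_move p a z : compatible p a -> adj p z ->
  adj a (move a p z) /\ c a (move a p z) = sigma (c p z) /\ compatible z (move a p z).
Proof.
  intros Hpa Hpz.
  assert (Hout : outgoing a (sigma (c p z))).
  { pose proof (outgoing_colour p z Hpz). pose proof (compatible_side p a Hpa).
    unfold outgoing in *. rewrite sigma_is_inl. tauto. }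
  destruct (nbr_col_spec _ _ Hout) as [Ha Hca]. split; [|split]; auto.
  unfold compatible. now rewrite (in_colour_eq a), (in_colour_eq p z).
Qed.

Lemma move_back p a z : compatible p a -> adj p z -> move (move a p z) z p = a.
Proof.
  intros Hpa Hpz. destruct (compatible_move p a z Hpa Hpz) as [Ha _].
  unfold move at 1.
  rewrite <- (in_colour_eq z p), <- Hpa, (in_colour_eq (move a p z) a); auto.
  apply nbr_col_colour; auto.
Qed.

(* [transport p a l e e']: moving [a] along the walk [p :: l], which ends at [e],
   ends at [e']. *)
Inductive transport : V -> V -> list V -> V -> V -> Prop :=
| transport_nil p a : transport p a [] p a
| transport_cons p a z l e e' :
    adj p z -> transport z (move a p z) l e e' -> transport p a (z :: l) e e'.

Lemma transport_walk p a l e e' : transport p a l e e' -> is_walk adj (p :: l) /\ last l p = e.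
Proof.
  induction 1 as [|p a z l e e' Hpz _ [Hwalk Hlast]]; [simpl; auto|].
  split; [destruct l; simpl in *; tauto | now rewrite last_cons_default].
Qed.

Lemma transport_compatible p a l e e' :
  compatible p a -> transport p a l e e' -> compatible e e'.
Proof.
  intros Hpa HT. induction HT as [|p a z l e e' Hpz _ IH]; auto.
  apply IH, (compatible_move p a z Hpa Hpz).
Qed.

Lemma transport_snoc p a l e e' w : transport p a l e e' -> adj e w ->
  transport p a (l ++ [w]) w (move e' e w).
Proof. induction 1; intros; simpl; repeat constructor; auto. Qed.

Lemma transport_app p a l1 e e' l2 f f' :
  transport p a l1 e e' -> transport e e' l2 f f' -> transport p a (l1 ++ l2) f f'.
Proof. induction 1; intros; simpl; [|constructor]; auto. Qed.

Lemma transport_rev p a l e e' :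
  compatible p a -> transport p a l e e' -> exists l', transport e e' l' p a.
Proof.
  intros Hpa HT. induction HT as [p a|p a z l e e' Hpz _ IH].
  - exists []. constructor.
  - destruct (compatible_move p a z Hpa Hpz) as [_ [_ Hz]].
    destruct (IH Hz) as [l' Hl']. exists (l' ++ [p]).
    rewrite <- (move_back p a z Hpa Hpz). apply transport_snoc; auto.
Qed.

Lemma transport_shortcut p a l e e' : compatible p a -> transport p a l e e' ->
  ~ no_backtrack (p :: l) -> exists l', length l' < length l /\ transport p a l' e e'.
Proof.
  intros Hpa HT. induction HT as [p a|p a z l e e' Hpz HT IH]; [simpl; tauto|].
  intros Hback. destruct (compatible_move p a z Hpa Hpz) as [_ [_ Hz]].
  destruct l as [|w l]; [simpl in Hback; tauto|].
  destruct (classic (p = w)) as [<-|Hpw].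
  - inversion HT as [|? ? ? ? ? ? Hzp HT']; subst.
    rewrite (move_back p a z Hpa Hpz) in HT'. exists l. simpl. auto.
  - destruct IH as [l' [Hlen HT']]; [exact Hz | simpl in *; tauto|].
    exists (z :: l'). simpl in *. split; [lia | now constructor].
Qed.

Lemma transport_closed p a l e' : compatible p a -> transport p a l p e' -> e' = a.
Proof.
  remember (length l) as n eqn:Hn. revert l Hn.
  induction n as [n IH] using lt_wf_ind. intros l Hn Hpa HT.
  destruct l as [|z l]; [now inversion HT|].
  destruct (transport_walk _ _ _ _ _ HT) as [Hwalk Hlast].
  destruct (transport_shortcut _ _ _ _ _ Hpa HT) as [l' [Hlen HT']].
  { intro Hnb. now apply (acyclic p (z :: l)). }
  apply (IH (length l') ltac:(lia) l'); auto.
Qed.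

Lemma transport_functional p a l l' z b b' : compatible p a ->
  transport p a l z b -> transport p a l' z b' -> b = b'.
Proof.
  intros Hpa HT HT'. destruct (transport_rev _ _ _ _ _ Hpa HT') as [r Hr].
  apply (transport_closed z b' (r ++ l)).
  - eapply transport_compatible; eauto.
  - eapply transport_app; eauto.
Qed.

Lemma transport_total p a z : exists l e', transport p a l z e'.
Proof.
  pose proof (connected p z) as Hpz. apply clos_rt_rt1n in Hpz. revert a.
  induction Hpz as [p|p w z Hpw _ IH]; intros a.
  - exists [], a. constructor.
  - destruct (IH (move a p w)) as [l [e' He]]. exists (w :: l), e'. now constructor.
Qed.

(* By acyclicity all walks from [p] to [z] transport [a] to the same vertex. *)
Definition extend (p a z : V) : V :=
  epsilon (inhabits z) (fun z' => exists l, transport p a l z z').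

Lemma extend_spec p a z : exists l, transport p a l z (extend p a z).
Proof.
  unfold extend. apply epsilon_spec. destruct (transport_total p a z) as [l [e' He]]. eauto.
Qed.

Lemma extend_root p a : compatible p a -> extend p a p = a.
Proof.
  intros Hpa. destruct (extend_spec p a p) as [l Hl].
  eapply transport_functional; eauto. constructor.
Qed.

Lemma extend_compatible p a z : compatible p a -> compatible z (extend p a z).
Proof. intros Hpa. destruct (extend_spec p a z). eapply transport_compatible; eauto. Qed.

Lemma extend_move p a z w : compatible p a -> adj z w ->
  extend p a w = move (extend p a z) z w.
Proof.
  intros Hpa Hzw. destruct (extend_spec p a z) as [l Hl].
  destruct (extend_spec p a w) as [l' Hl'].
  apply (transport_functional p a l' (l ++ [w]) w); auto. now apply transport_snoc.
Qed.

Lemma extend_arc p a z w : compatible p a -> adj z w ->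
  adj (extend p a z) (extend p a w) /\ c (extend p a z) (extend p a w) = sigma (c z w).
Proof.
  intros Hpa Hzw. rewrite (extend_move p a z w Hpa Hzw).
  destruct (compatible_move z (extend p a z) w) as [H1 [H2 _]]; auto.
  now apply extend_compatible.
Qed.

End Transport.

Lemma extend_cancel sigma tau p a :
  (forall col, is_inl (sigma col) <-> is_inl col) ->
  (forall col, is_inl (tau col) <-> is_inl col) ->
  (forall col, tau (sigma col) = col) -> compatible sigma p a ->
  forall z, extend tau a p (extend sigma p a z) = z.
Proof.
  intros Hsigma Htau Hcancel Hpa z.
  assert (Hap : compatible tau a p) by (unfold compatible in *; now rewrite Hpa, Hcancel).
  pose proof (connected p z) as Hpz. apply clos_rt_rtn1 in Hpz.
  induction Hpz as [|w z Hwz _ IH]; [now rewrite !extend_root|].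
  destruct (extend_arc sigma Hsigma p a w z Hpa Hwz) as [Harc Hcol].
  rewrite (extend_move tau Htau a p _ _ Hap Harc), IH.
  unfold move. rewrite Hcol, Hcancel. now apply nbr_col_colour.
Qed.

Section Uc.
Variables (M : (X -> X) -> Prop) (N : (Y -> Y) -> Prop).
Hypothesis HM : perm_group M.
Hypothesis HN : perm_group N.

Notation G := (U_c adj VX c M N).

Definition local_action (g : V -> V) (v : V) : Prop :=
  exists s1 s2, M s1 /\ N s2 /\
    forall w, adj v w -> c (g v) (g w) = sum_map s1 s2 (c v w).

Lemma U_c_local_action g v : G g -> local_action g v.
Proof.
  intros [_ [_ [_ [HlocX HlocY]]]]. destruct HM as [_ [Mid _]]. destruct HN as [_ [Nid _]].
  destruct (classic (VX v)) as [Hv|Hv].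
  - destruct (HlocX v Hv) as [s [Hs Hloc]]. exists s, (fun y => y).
    split; [|split]; auto. intros w Hvw.
    pose proof (outgoing_colour v w Hvw) as Hout. unfold outgoing in Hout.
    destruct (c v w) as [x|y] eqn:Ec; simpl in *; [now apply Hloc | tauto].
  - destruct (HlocY v Hv) as [s [Hs Hloc]]. exists (fun x => x), s.
    split; [|split]; auto. intros w Hvw.
    pose proof (outgoing_colour v w Hvw) as Hout. unfold outgoing in Hout.
    destruct (c v w) as [x|y] eqn:Ec; simpl in *; [tauto | now apply Hloc].
Qed.

Lemma local_action_side g v : (forall u w, adj u w -> adj (g u) (g w)) ->
  local_action g v -> (VX (g v) <-> VX v).
Proof.
  intros Hg [s1 [s2 [_ [_ Hloc]]]].
  destruct (has_in_neighbour v) as [w Hwv]. apply adj_sym in Hwv.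
  pose proof (outgoing_colour v w Hwv) as Hout.
  pose proof (outgoing_colour (g v) (g w) (Hg v w Hwv)) as Hout'.
  unfold outgoing in *. rewrite Hloc, is_inl_sum_map in Hout'; auto. tauto.
Qed.

Lemma U_c_intro g h : (forall z, h (g z) = z) -> (forall z, g (h z) = z) ->
  (forall u w, adj u w -> adj (g u) (g w)) -> (forall u w, adj u w -> adj (h u) (h w)) ->
  (forall v, local_action g v) -> G g.
Proof.
  intros Hhg Hgh Hg Hh Hloc.
  split; [split; [exists h; auto | intros u w; split; [apply Hg | ]] |].
  { intros Hguw. rewrite <- (Hhg u), <- (Hhg w). auto. }
  split; [intros v Hv; now apply local_action_side |].
  split; [intros w Hw; exists (h w); rewrite <- (local_action_side g (h w)), Hgh; auto |].
  split; intros v _; destruct (Hloc v) as [s1 [s2 [Hs1 [Hs2 Hact]]]];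
    [exists s1 | exists s2]; split; auto; intros w col Hvw Hcol; now rewrite Hact, Hcol.
Qed.

Lemma U_c_inverse g : G g -> exists h, (forall z, h (g z) = z) /\ (forall z, g (h z) = z).
Proof. intros [[[h Hh] _] _]. eauto. Qed.

Lemma U_c_adj g u w : G g -> adj u w -> adj (g u) (g w).
Proof. intros [[_ Hadj] _]. apply Hadj. Qed.

Lemma U_c_id : G (fun z => z).
Proof.
  destruct HM as [_ [Mid _]]. destruct HN as [_ [Nid _]].
  apply U_c_intro with (fun z => z); auto.
  intros v. exists (fun x => x), (fun y => y). split; [|split]; auto.
  intros w _. now rewrite sum_map_id.
Qed.

Lemma U_c_comp g g' : G g -> G g' -> G (fun z => g' (g z)).
Proof.
  intros Hg Hg'. destruct HM as [_ [_ [Mcomp _]]]. destruct HN as [_ [_ [Ncomp _]]].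
  destruct (U_c_inverse g Hg) as [h [Hhg Hgh]].
  destruct (U_c_inverse g' Hg') as [h' [Hhg' Hgh']].
  apply U_c_intro with (fun z => h (h' z)).
  - intros z. now rewrite Hhg', Hhg.
  - intros z. now rewrite Hgh, Hgh'.
  - intros u w Huw. now apply (U_c_adj g'), (U_c_adj g).
  - intros u w Huw. apply (proj2 (proj2 (proj1 Hg) _ _)). rewrite !Hgh.
    apply (proj2 (proj2 (proj1 Hg') _ _)). now rewrite !Hgh'.
  - intros v. destruct (U_c_local_action g v Hg) as [s1 [s2 [Hs1 [Hs2 Hact]]]].
    destruct (U_c_local_action g' (g v) Hg') as [t1 [t2 [Ht1 [Ht2 Hact']]]].
    exists (fun x => t1 (s1 x)), (fun y => t2 (s2 y)). split; [|split]; auto.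
    intros w Hvw. rewrite Hact', Hact, sum_map_comp; auto. now apply (U_c_adj g).
Qed.

Lemma U_c_inv g h : G g -> (forall z, h (g z) = z) -> (forall z, g (h z) = z) -> G h.
Proof.
  intros Hg Hhg Hgh. destruct HM as [_ [_ [_ Minv]]]. destruct HN as [_ [_ [_ Ninv]]].
  assert (Hh : forall u w, adj u w -> adj (h u) (h w)).
  { intros u w Huw. apply (proj2 (proj2 (proj1 Hg) _ _)). now rewrite !Hgh. }
  apply U_c_intro with g; auto.
  - intros u w. now apply U_c_adj.
  - intros v. destruct (U_c_local_action g (h v) Hg) as [s1 [s2 [Hs1 [Hs2 Hact]]]].
    destruct (Minv s1 Hs1) as [t1 [Ht1 [Hts1 _]]].
    destruct (Ninv s2 Hs2) as [t2 [Ht2 [Hts2 _]]].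
    exists t1, t2. split; [|split]; auto. intros w Hvw.
    rewrite <- (sum_map_cancel s1 t1 s2 t2 Hts1 Hts2 (c (h v) (h w))), <- Hact, !Hgh; auto.
Qed.

Lemma U_c_perm_group : perm_group G.
Proof.
  split; [intros g [[Hbij _] _]; exact Hbij |].
  split; [apply U_c_id |].
  split; [intros g g' Hg Hg'; now apply U_c_comp |].
  intros g Hg. destruct (U_c_inverse g Hg) as [h [Hhg Hgh]].
  exists h. split; [now apply U_c_inv with g | auto].
Qed.

Lemma U_c_extension s1 s2 p a : M s1 -> N s2 ->
  in_colour a = sum_map s1 s2 (in_colour p) ->
  exists g, G g /\ g p = a /\ forall z w, adj z w -> c (g z) (g w) = sum_map s1 s2 (c z w).
Proof.
  intros Hs1 Hs2 Hpa. destruct HM as [_ [_ [_ Minv]]]. destruct HN as [_ [_ [_ Ninv]]].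
  destruct (Minv s1 Hs1) as [t1 [_ [Hts1 Hst1]]].
  destruct (Ninv s2 Hs2) as [t2 [_ [Hts2 Hst2]]].
  set (sigma := sum_map s1 s2). set (tau := sum_map t1 t2).
  assert (Hsigma : forall col, is_inl (sigma col) <-> is_inl col) by apply is_inl_sum_map.
  assert (Htau : forall col, is_inl (tau col) <-> is_inl col) by apply is_inl_sum_map.
  assert (Hap : compatible tau a p).
  { unfold compatible. rewrite Hpa. symmetry. now apply sum_map_cancel. }
  exists (extend sigma p a). split; [|split].
  - apply U_c_intro with (extend tau a p).
    + apply extend_cancel; auto. now apply sum_map_cancel.
    + apply extend_cancel; auto. now apply sum_map_cancel.
    + intros u w Huw. now apply extend_arc.
    + intros u w Huw. now apply extend_arc.
    + intros v. exists s1, s2. split; [|split]; auto. intros w Hvw. now apply extend_arc.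
  - now apply extend_root.
  - intros z w Hzw. now apply extend_arc.
Qed.

Definition colour_class (col : X + Y) : orbits M + orbits N :=
  sum_map (orbit_class M) (orbit_class N) col.

Lemma colour_class_eq col col' : colour_class col = colour_class col' <->
  exists s1 s2, M s1 /\ N s2 /\ col' = sum_map s1 s2 col.
Proof.
  destruct HM as [_ [Mid _]]. destruct HN as [_ [Nid _]].
  destruct col as [x|y], col' as [x'|y']; simpl; split;
    try (intros H; discriminate H); try (intros [? [? [_ [_ H]]]]; discriminate H).
  - intros H. assert (Hx : orbit_class M x = orbit_class M x') by congruence.
    apply (orbit_class_eq _ _ HM) in Hx. destruct Hx as [s [Hs <-]]. exists s, (fun y => y). auto.
  - intros [s1 [s2 [Hs1 [_ H]]]]. injection H as ->. f_equal.
    apply (orbit_class_eq _ _ HM). eauto.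
  - intros H. assert (Hy : orbit_class N y = orbit_class N y') by congruence.
    apply (orbit_class_eq _ _ HN) in Hy. destruct Hy as [s [Hs <-]]. exists (fun x => x), s. auto.
  - intros [s1 [s2 [_ [Hs2 H]]]]. injection H as ->. f_equal.
    apply (orbit_class_eq _ _ HN). eauto.
Qed.

Definition vertex_class (z : V) : orbits M + orbits N := colour_class (in_colour z).

Lemma vertex_class_invariant g z : G g -> vertex_class (g z) = vertex_class z.
Proof.
  intros Hg. destruct (has_in_neighbour z) as [q Hqz].
  destruct (U_c_local_action g q Hg) as [s1 [s2 [Hs1 [Hs2 Hact]]]].
  unfold vertex_class. rewrite (in_colour_eq (g q) (g z)) by now apply U_c_adj.
  rewrite Hact, <- (in_colour_eq q z) by exact Hqz.
  symmetry. apply colour_class_eq. eauto.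
Qed.

Lemma vertex_class_transitive z z' :
  vertex_class z = vertex_class z' -> exists g, G g /\ g z = z'.
Proof.
  intros H. apply colour_class_eq in H. destruct H as [s1 [s2 [Hs1 [Hs2 H]]]].
  destruct (U_c_extension s1 s2 z z' Hs1 Hs2 H) as [g [Hg [Hgz _]]]. eauto.
Qed.

Lemma vertex_class_surj s : exists z, vertex_class z = s.
Proof.
  destruct s as [O|O];
    [destruct (orbit_class_surj _ _ O) as [x ->]; destruct (in_colour_surj (inl x)) as [z Hz]
    |destruct (orbit_class_surj _ _ O) as [y ->]; destruct (in_colour_surj (inr y)) as [z Hz]];
    exists z; unfold vertex_class; now rewrite Hz.
Qed.

Lemma vertex_class_edge u v : adj u v -> exists ab, ends vertex_class ab u v.
Proof.
  intros Huv. pose proof (Hbip u v Huv) as Hside. rewrite !in_colour_side in Hside.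
  unfold ends, vertex_class.
  destruct (in_colour u) as [x|y] eqn:Eu, (in_colour v) as [x'|y'] eqn:Ev;
    simpl in Hside; try tauto.
  - exists (orbit_class M x, orbit_class N y'). now left.
  - exists (orbit_class M x', orbit_class N y). now right.
Qed.

Lemma vertex_class_edge_surj O1 O2 :
  exists u v, adj u v /\ vertex_class u = inl O1 /\ vertex_class v = inr O2.
Proof.
  destruct (orbit_class_surj _ _ O1) as [x ->]. destruct (orbit_class_surj _ _ O2) as [y ->].
  destruct (in_colour_surj (inr y)) as [a Ha].
  assert (Hout : outgoing a (inl x)).
  { unfold outgoing. rewrite in_colour_side, Ha. simpl. tauto. }
  destruct (nbr_col_spec a (inl x) Hout) as [Hab Hcol].
  exists (nbr_col a (inl x)), a. unfold vertex_class.
  rewrite (in_colour_eq a), Ha, Hcol; auto.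
Qed.

Lemma vertex_class_edge_transitive_from_VX a b a' b' : adj a b -> adj a' b' -> VX a ->
  vertex_class a = vertex_class a' -> vertex_class b = vertex_class b' ->
  exists g, G g /\ g a = a' /\ g b = b'.
Proof.
  intros Hab Ha'b' Ha Hclass_a Hclass_b.
  apply colour_class_eq in Hclass_a as [t1 [t2 [_ [Ht2 Ha']]]].
  apply colour_class_eq in Hclass_b as [s1 [s2 [Hs1 [_ Hb']]]].
  pose proof (outgoing_colour a b Hab) as Hout. unfold outgoing in Hout.
  pose proof (proj1 (in_colour_side a) Ha) as Hin.
  destruct (in_colour a) as [x|y] eqn:Ea; [simpl in Hin; tauto|].
  destruct (c a b) as [x|y'] eqn:Eab; [|simpl in Hout; tauto].
  destruct (U_c_extension s1 t2 a a') as [g [Hg [Hga Hcol]]]; auto.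
  { now rewrite Ha', Ea. }
  exists g. split; [|split]; auto.
  apply (colour_inj a'); auto.
  { rewrite <- Hga. now apply U_c_adj. }
  rewrite <- (in_colour_eq a' b' Ha'b'), Hb', <- Hga, Hcol, (in_colour_eq a b Hab), Eab; auto.
Qed.

Lemma vertex_class_edge_transitive u v u' v' : adj u v -> adj u' v' ->
  vertex_class u = vertex_class u' -> vertex_class v = vertex_class v' ->
  exists g, G g /\ g u = u' /\ g v = v'.
Proof.
  intros Huv Hu'v' Hu Hv. destruct (classic (VX u)) as [HVu|HVu].
  - now apply vertex_class_edge_transitive_from_VX.
  - assert (HVv : VX v) by (pose proof (Hbip u v Huv); tauto).
    destruct (vertex_class_edge_transitive_from_VX v u v' u') as [g [Hg [Hgv Hgu]]]; auto.
    eauto.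
Qed.

End Uc.

End ColouredTree.

Theorem lemma4p4
  (X Y : Type)
  (HX : exists x1 x2 : X, x1 <> x2)
  (HY : exists y1 y2 : Y, y1 <> y2)
  (M : (X -> X) -> Prop) (N : (Y -> Y) -> Prop)
  (HM : perm_group M) (HN : perm_group N)
  (HMnt : nontrivial_group M) (HNnt : nontrivial_group N)
  (V : Type) (adj : V -> V -> Prop) (VX : V -> Prop)
  (Htree : is_tree adj) (Hbip : bipartition adj VX)
  (c : V -> V -> X + Y) (Hc : legal_colouring adj VX c) :
  quotient_iso_Kbip adj (U_c adj VX c M N) (orbits M) (orbits N).
Proof.
  destruct HX as [x0 _], HY as [y0 _].
  destruct Htree as [adj_sym [_ [V_inhabited [connected acyclic]]]].
  apply quotient_iso_Kbip_of_labelling with (F := vertex_class V X Y adj c M N).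
  - exact adj_sym.
  - now apply U_c_perm_group.
  - intros g z. now apply vertex_class_invariant.
  - eapply vertex_class_transitive; eauto.
  - eapply vertex_class_surj; eauto.
  - eapply vertex_class_edge; eauto.
  - eapply vertex_class_edge_surj; eauto.
  - eapply vertex_class_edge_transitive; eauto.
Qed.
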